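(* Let $r\ge2$, $\gamma=(\gamma_1,\dots,\gamma_r)$ with $\gamma_i\in(0,1)$, $\sum_i\gamma_i=1$, $p=d/n^{r-1}$, $c_\gamma=\frac{1}{r^{r-1}(r-1)\prod_i\gamma_i}$, $f=\left(\frac{c_\gamma\log d}{d}\right)^{1/(r-1)}$, and $m=\left(\frac{d}{(\log d)^r}\right)^{1/(r-1)}$ (assumed a positive integer dividing $n$). Let $k=(1-\rho)rnf$ with $\rho>0$ sufficiently small (and with $\gamma_ik$ integers). Then for $d$ sufficiently large and $n$ sufficiently large, \[ \mathbb{P}[Z_k>0]\ge\exp\left(-\frac{50n\sqrt{r(c_\gamma\log d)^{1/(r-1)}}}{d^{\frac{1-\rho/4}{r-1}}}\right), \] where $Z_k$ is the number of $\gamma$-balanced $P$-independent sets of size $k$ in $H\sim\mathcal{H}(r,n,p)$.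
   Context: $\mathcal{H}(r,n,p)$: random $r$-uniform $r$-partite hypergraph with vertex set $[n]\times[r]$, parts $V_i=[n]\times\{i\}=\{1_i,\dots,n_i\}$, each $e\in V_1\times\cdots\times V_r$ an edge independently with probability $p$. An independent set contains no edge; it is $\gamma$-balanced if $|I\cap V_i|=\gamma_i|I|$ for all $i$. With $n'=n/m$, the blocks are $P_{i,j}=\{((j-1)m+1)_i,\dots,(jm)_i\}$ for $i\in[r]$, $j\in[n']$; a $\gamma$-balanced $P$-independent set is a $\gamma$-balanced independent set $I$ with $|I\cap P_{i,j}|\le1$ for all $i,j$. *)

From HB Require Import structures.
From mathcomp Require Import all_boot all_order all_algebra.
From mathcomp Require Import boolp reals sequences exp.
Set Implicit Arguments. Unset Strict Implicit. Unset Printing Implicit Defensive.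
Import Order.TTheory GRing.Theory Num.Theory.
Local Open Scope ring_scope.

(* Vertices of H(r,n,p): pairs (x, i) with x : 'I_n (x = 0 stands for vertex 1)
   and i : 'I_r (the part).  Part V_i = [n] x {i}. *)
Definition vertex (n r : nat) := ('I_n * 'I_r)%type.

(* An edge e in V_1 x ... x V_r is given by the choice e i : 'I_n in each part i;
   it is the vertex set {(e i, i) | i}. *)
Definition edge (n r : nat) := {ffun 'I_r -> 'I_n}.

Definition hgraph (n r : nat) := {set edge n r}.

Definition independent n r (H : hgraph n r) (I : {set vertex n r}) : Prop :=
  forall e, e \in H -> ~ (forall i : 'I_r, (e i, i) \in I).

Definition balanced (R : realType) n r (gamma : 'I_r -> R) (I : {set vertex n r}) : Prop :=
  forall i : 'I_r, (#|[set v in I | v.2 == i]|%:R : R) = gamma i * (#|I|%:R).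

(* Block P_{i,j} (0-indexed j < n/m): vertices of part i whose index x
   (0-indexed) lies in {j m, ..., j m + m - 1}, i.e. x %/ m = j. *)
Definition block n r (m : nat) (i : 'I_r) (j : nat) : {set vertex n r} :=
  [set v : vertex n r | (v.2 == i) && (nat_of_ord v.1 %/ m == j)%N].

Definition P_independent (R : realType) n r (m : nat) (gamma : 'I_r -> R)
    (H : hgraph n r) (I : {set vertex n r}) : Prop :=
  balanced gamma I /\ independent H I /\
  (forall (i : 'I_r) (j : nat), (j < n %/ m)%N -> (#|I :&: block n m i j| <= 1)%N).

Definition Zk_pos (R : realType) n r (m k : nat) (gamma : 'I_r -> R) (H : hgraph n r) : Prop :=
  exists I : {set vertex n r}, P_independent m gamma H I /\ #|I| = k.

(* Probability of an event under H(r,n,p): each of the n^r possible edges is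
   present independently with probability p. *)
Definition hprob (R : realType) n r (p : R) (A : hgraph n r -> Prop) : R :=
  \sum_(H : hgraph n r | `[< A H >]) p ^+ #|H| * (1 - p) ^+ #|~: H|.

From HB Require Import structures.
From mathcomp Require Import all_boot all_order all_algebra.
From mathcomp Require Import boolp reals sequences exp.
From mathcomp Require Import ring lra.
Set Implicit Arguments.
Unset Strict Implicit.
Unset Printing Implicit Defensive.
Import Order.TTheory GRing.Theory Num.Theory.
Local Open Scope ring_scope.

(* A single fixed vertex set already gives the bound.  Take k_i = gamma_i k vertices
   of part i at positions 0, m, 2m, ..., one per block; this set I is gamma-balanced
   and P-respecting, and it is independent as soon as none of the at most k^r edges
   inside I is present, which happens with probability (1 - p)^(k^r) >= exp(-2 p k^r).
   Since f^(r-1) = c log d / d, the exponent is 2 p k^r <= 2 n r^r (c log d) f, i.e.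
   of order n polylog(d) / d^(1/(r-1)); the extra factor d^(rho/(4(r-1))) in the target
   swallows the polylogarithmic factors once d is large. *)

Lemma prod_bernoulli_weight (R : comPzRingType) (T : finType) (p : R) (H : {set T}) :
  \prod_(e : T) (if e \in H then p else 1 - p) = p ^+ #|H| * (1 - p) ^+ #|~: H|.
Proof.
rewrite (bigID (mem H)) /= -!prodr_const; congr (_ * _).
  by apply: eq_big => [e|e /= ->].
by apply: eq_big => [e|e /= /negbTE ->]; rewrite ?in_setC.
Qed.

Lemma hprob_ge_avoid (R : realType) n r (p : R) (A : hgraph n r -> Prop)
    (S : {set edge n r}) :
  0 <= p <= 1 -> (forall H : hgraph n r, [disjoint H & S] -> A H) ->
  (1 - p) ^+ #|S| <= hprob p A.
Proof.
move=> /andP[p0 p1] hA.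
(* Expanding [(1 - p)^|S|] as a sum over all graphs H, the term of H is its weight
   when H avoids S and 0 otherwise. *)
pose F e (b : bool) := if b then (if e \in S then 0 else p) else 1 - p.
have -> : (1 - p) ^+ #|S| = \sum_(H : hgraph n r) \prod_e F e (e \in H).
  have -> : (1 - p) ^+ #|S| = \prod_e \sum_(b : bool) F e b.
    rewrite -prodr_const [RHS](bigID (mem S)) /= [X in _ * X]big1 ?mulr1.
      by apply: eq_bigr => e eS; rewrite big_bool /F /= eS add0r.
    by move=> e /negbTE eS; rewrite big_bool /F /= eS subrKC.
  rewrite bigA_distr_bigA (reindex (fun H : hgraph n r => [ffun e => e \in H])) /=.
    by apply: eq_bigr => H _; apply: eq_bigr => e _; rewrite ffunE.
  exists (fun g : {ffun edge n r -> bool} => [set e | g e]) => [H _|g _].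
    by apply/setP => e; rewrite inE ffunE.
  by apply/ffunP => e; rewrite ffunE inE.
rewrite /hprob [X in _ <= X]big_mkcond /=; apply: ler_sum => H _.
have [HS|] := boolP [disjoint H & S].
  rewrite asboolT; last exact: hA.
  rewrite -prod_bernoulli_weight le_eqVlt; apply/orP; left; apply/eqP.
  apply: eq_bigr => e _; rewrite /F; case eH: (e \in H) => //.
  by rewrite (disjointFr HS eH).
move=> /pred0Pn[e /andP[/= eH eS]].
rewrite (bigD1 e) //= /F eH eS mul0r.
case: `[< A H >] => //; rewrite -prod_bernoulli_weight.
by apply: prodr_ge0 => x _; case: (x \in H); rewrite ?subr_ge0.
Qed.

Local Open Scope nat_scope.

Lemma card_multiples_lt n m K : 0 < m -> K * m <= n ->
  #|[set x : 'I_n | (m %| x) && (x < K * m)]| = K.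
Proof.
move=> m0; elim: K => [|K IH] hK.
  by apply/eqP; rewrite cards_eq0; apply/eqP/setP => x; rewrite !inE ltn0 andbF.
have hKn : K * m < n by apply: leq_trans hK; rewrite mulSn addnC -addn1 leq_add2l.
rewrite (_ : [set x : 'I_n | _] = Ordinal hKn |: [set x : 'I_n | (m %| x) && (x < K * m)]).
  by rewrite cardsU1 IH ?(ltnW hKn) // !inE ltnn andbF.
apply/setP => x; rewrite !inE -val_eqE /=; apply/idP/idP.
  move=> /andP[/dvdnP[q ->]]; rewrite dvdn_mull // ltn_mul2r m0 ltnS leq_eqVlt.
  by case/orP=> [/eqP->|hq]; rewrite ?eqxx // ltn_mul2r m0 hq orbT.
case/orP=> [/eqP->|/andP[-> h]]; first by rewrite dvdn_mull // ltn_mul2r m0 ltnS leqnn.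
by apply: leq_trans h _; rewrite leq_mul2r leqnSn orbT.
Qed.

Definition edges_within n r (I : {set vertex n r}) : {set edge n r} :=
  [set e : edge n r | [forall i, (e i, i) \in I]].

Lemma card_edges_within n r (I : {set vertex n r}) : 0 < r ->
  #|edges_within I| <= #|I| ^ r.
Proof.
move=> r0; apply: (@leq_trans #|ffun_on (mem [set v.1 | v in I])|).
  apply: subset_leq_card; apply/subsetP => e; rewrite inE => /forallP he.
  by apply/ffun_onP => i; apply/imsetP; exists (e i, i).
by rewrite card_ffun_on card_ord leq_exp2r // leq_imset_card.
Qed.

Lemma independent_disjoint_edges_within n r (H : hgraph n r) (I : {set vertex n r}) :
  [disjoint H & edges_within I] -> independent H I.
Proof.
by move=> HI e eH eI; move: (disjointFr HI eH); rewrite inE; move/forallP: eI => ->.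
Qed.

Section SpreadSet.
Variables (n r m : nat) (kk : 'I_r -> nat).
Hypotheses (m_gt0 : 0 < m) (kk_le : forall i, kk i * m <= n).

Definition spread_set : {set vertex n r} :=
  [set v : vertex n r | (m %| v.1) && (v.1 < kk v.2 * m)].

Lemma card_spread_set_part i : #|[set v in spread_set | v.2 == i]| = kk i.
Proof.
have pair_inj : injective (fun x : 'I_n => (x, i)) by move=> x y [].
rewrite -(card_multiples_lt m_gt0 (kk_le i)) -(card_imset _ pair_inj).
apply: eq_card => -[x j]; rewrite !inE; apply/andP/imsetP => /=.
  by case=> /andP[hm hx] /eqP ji; subst j; exists x; rewrite // inE hm.
by case=> y; rewrite inE => hy [-> ->]; rewrite eqxx.
Qed.

Lemma card_spread_set : #|spread_set| = \sum_i kk i.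
Proof.
rewrite -sum1_card (partition_big (fun v : vertex n r => v.2) predT) //=.
apply: eq_bigr => i _; rewrite -card_spread_set_part -sum1_card.
by apply: eq_bigl => v; rewrite !inE.
Qed.

Lemma card_spread_set_block i j : #|spread_set :&: block n m i j| <= 1.
Proof.
apply/card_le1_eqP => -[x1 x2] [y1 y2]; rewrite !inE /=.
case/andP=> /andP[/dvdnP[q1 hx] _] /andP[/eqP <- /eqP ex].
case/andP=> /andP[/dvdnP[q2 hy] _] /andP[/eqP <- /eqP ey].
congr (_, _); apply: val_inj => /=.
by move: ex ey; rewrite hx hy !mulnK // => -> ->.
Qed.

End SpreadSet.

Local Open Scope ring_scope.

Section RealBounds.
Variable R : realType.
Implicit Types (x a d C : R) (j : nat).

Lemma powR_invnK x j : 0 <= x -> (0 < j)%N -> powR x j%:R^-1 ^+ j = x.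
Proof.
move=> x0 j0; rewrite -powR_mulrn ?powR_ge0 // -powRrM mulVf ?powRr1 //.
by rewrite pnatr_eq0 -lt0n.
Qed.

Lemma exprK_powR_invn x j : 0 <= x -> (0 < j)%N -> powR (x ^+ j) j%:R^-1 = x.
Proof.
move=> x0 j0; rewrite -powR_mulrn // -powRrM mulfV ?powRr1 //.
by rewrite pnatr_eq0 -lt0n.
Qed.

Lemma expR_Nmul2_le_1Bx x : 0 <= x -> x <= 2^-1 -> expR (- (2 * x)) <= 1 - x.
Proof.
move=> x0 x1; rewrite expRN -[X in X <= _]mul1r ler_pdivrMr ?expR_gt0 // mulrC.
have := expR_ge1Dx (2 * x) => h.
have h2 : 1 <= (1 + 2 * x) * (1 - x) by nra.
by apply: (le_trans h2); apply: ler_wpM2r; lra.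
Qed.

Lemma ln_ge_of_expR_le x d : 0 < d -> expR x <= d -> x <= ln d.
Proof. by move=> d0 hx; rewrite -ler_expR lnK. Qed.

Lemma expR_le_1Bx_expn x j : 0 <= x -> x <= 2^-1 ->
  expR (- (2 * x * j%:R)) <= (1 - x) ^+ j.
Proof.
move=> x0 x1; rewrite -mulNr expRM_natr lerXn2r ?nnegrE ?expR_ge0 //; first lra.
exact: expR_Nmul2_le_1Bx x0 x1.
Qed.

Lemma edge_prob_le_half d (n j : nat) : 0 < d -> (0 < j)%N -> 2 * d < n%:R ->
  0 <= d / n%:R ^+ j <= 2^-1.
Proof.
move=> d0 j0 hn; have n0 : (0 < n)%N by rewrite -(ltr0n R); lra.
have n_le : n%:R <= n%:R ^+ j :> R.
  by rewrite -natrX ler_nat -{1}(expn1 n) leq_pexp2l.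
apply/andP; split; first by rewrite divr_ge0 ?exprn_ge0 ?ler0n ?ltW.
by rewrite ler_pdivrMr ?exprn_gt0 ?ltr0n // ler_pdivlMl //; lra.
Qed.

Lemma ln_le_powR_div d a : 0 < d -> 0 < a -> ln d <= powR d a / a.
Proof.
move=> d0 a0; have h1 : -1 < powR d a - 1 by have := powR_gt0 a d0; lra.
have := le_ln1Dx h1; rewrite addrC subrK ln_powR => h.
by rewrite ler_pdivlMr // mulrC; lra.
Qed.

(* Combine [ln d <= 4 d^(a/4) / a] with [16 C / a^2 <= d^(a/2)]. *)
Lemma mul_ln_sqr_le_powR C a d : 0 <= C -> 0 < a -> 1 <= d ->
  powR (16 * C / a ^+ 2) (2 / a) <= d -> C * ln d ^+ 2 <= powR d a.
Proof.
move=> C0 a0 d1 hd; set K := 16 * C / a ^+ 2.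
have K0 : 0 <= K by rewrite /K; apply: divr_ge0; [lra|apply: sqr_ge0].
have hK : K <= powR d (a / 2).
  have := @ge0_ler_powR _ (a / 2) _ (powR K (2 / a)) d.
  rewrite -powRrM (_ : 2 / a * (a / 2) = 1) ?powRr1 //; last by field; rewrite gt_eqF.
  apply.
  - by apply: divr_ge0; lra.
  - by rewrite nnegrE powR_ge0.
  - by rewrite nnegrE; lra.
  - exact: hd.
have da : powR d a = powR d (a / 2) * powR d (a / 2).
  by rewrite -powRD ?(gt_eqF (lt_le_trans ltr01 d1)) ?implybT //; congr powR; field.
have da2 : powR d (a / 2) = powR d (a / 4) ^+ 2.
  by rewrite -powR_mulrn ?powR_ge0 // -powRrM; congr powR; field.
have L0 : 0 <= ln d by rewrite ln_ge0.
have hL : ln d <= powR d (a / 4) / (a / 4).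
  by apply: ln_le_powR_div; lra.
have hL2 : ln d ^+ 2 <= 16 / a ^+ 2 * powR d (a / 2).
  rewrite (_ : 16 / a ^+ 2 * _ = (powR d (a / 4) / (a / 4)) ^+ 2); last first.
    by rewrite da2; field; rewrite gt_eqF.
  by apply: lerXn2r; rewrite ?nnegrE // divr_ge0 ?powR_ge0 //; lra.
have Pa0 := powR_ge0 d (a / 2).
rewrite da; apply: (le_trans (ler_wpM2l C0 hL2)).
by rewrite mulrA (_ : C * _ = K) ?ler_wpM2r // /K mulrA [C * 16]mulrC.
Qed.

End RealBounds.

Section Asymptotics.
Variables (R : realType) (r : nat) (c d : R).
Hypotheses (r_ge2 : (2 <= r)%N) (c_gt0 : 0 < c) (d_gt1 : 1 < d).

Local Notation s := (r.-1%:R^-1 : R).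
Local Notation L := (ln d).
Local Notation f := (powR (c * ln d / d) r.-1%:R^-1).

Let r1_gt0 : (0 < r.-1)%N. Proof. by rewrite -ltnS prednK // ltnW. Qed.
Let rE : r = r.-1.+1. Proof. by rewrite prednK // ltnW. Qed.
Let exprr (x : R) : x ^+ r = x ^+ r.-1 * x.
Proof. by rewrite {1}rE exprSr. Qed.
Let d_gt0 : 0 < d. Proof. exact: lt_trans ltr01 d_gt1. Qed.
Let L_gt0 : 0 < L. Proof. exact: ln_gt0. Qed.
Let cLd_ge0 : 0 <= c * L / d.
Proof. by rewrite divr_ge0 ?mulr_ge0 // ltW. Qed.

Lemma f_mul_powR : f * powR (d / L ^+ r) s = powR c s / L.
Proof.
have ->: powR c s = powR (c * L / d * (d / L ^+ r) * L ^+ r.-1) s.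
  by congr powR; rewrite exprr; field; rewrite !gt_eqF ?exprn_gt0.
have dLr_ge0 : 0 <= d / L ^+ r by rewrite divr_ge0 ?exprn_ge0 // ltW.
have Lr1_ge0 : 0 <= L ^+ r.-1 by rewrite exprn_ge0 // ltW.
rewrite (powRM _ (mulr_ge0 cLd_ge0 dLr_ge0) Lr1_ge0) (powRM _ cLd_ge0 dLr_ge0).
by rewrite exprK_powR_invn ?mulfK ?gt_eqF // ltW.
Qed.

Lemma edge_exponent_le_weight (n : nat) (rho : R) : (0 < n)%N -> 0 <= rho <= 1 ->
  2 * (d / n%:R ^+ r.-1) * ((1 - rho) * r%:R * n%:R * f) ^+ r
    <= 2 * n%:R * r%:R ^+ r * (c * L) * f.
Proof.
move=> n_gt0 /andP[rho0 rho1]; have n0 : 0 < n%:R :> R by rewrite ltr0n.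
have f0 : 0 <= f := powR_ge0 _ _.
rewrite !exprMn [f ^+ r]exprr [n%:R ^+ r]exprr powR_invnK //.
rewrite (_ : _ * _ = (1 - rho) ^+ r * (2 * n%:R * r%:R ^+ r * (c * L) * f)); last first.
  by field; rewrite !gt_eqF ?exprn_gt0.
apply: ler_piMl; first by rewrite !mulr_ge0 ?exprn_ge0 ?ler0n ?powR_ge0 ?ltW.
by apply: exprn_ile1; lra.
Qed.

Lemma weight_le_target (n : nat) (rho : R) : 0 < rho -> 1 <= c * L ->
  2 * r%:R ^+ r * c ^+ 2 * L ^+ 2 <= powR d (rho * s / 4) ->
  2 * n%:R * r%:R ^+ r * (c * L) * f
    <= 50 * n%:R * Num.sqrt (r%:R * powR (c * L) s) / powR d ((1 - rho / 4) / r.-1%:R).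
Proof.
move=> rho0 cL1 hpoly.
set A := powR (c * L) s; set Ds := powR d s; set E := powR d (rho * s / 4).
have s0 : 0 < s by rewrite invr_gt0 ltr0n.
have s1 : s <= 1 by rewrite invf_le1 ?ltr0n ?ler1n.
have cL0 : 0 <= c * L by rewrite mulr_ge0 ?ltW.
have A1 : 1 <= A by rewrite /A -{1}(powRr0 (c * L)) ler_powR // ltW.
have AcL : A <= c * L by apply: ler1_powR.
have Ds0 : 0 < Ds by apply: powR_gt0.
have E0 : 0 < E by apply: powR_gt0.
have -> : f = A / Ds.
  rewrite /A /Ds -{2}(divfK (lt0r_neq0 d_gt0) (c * L)).
  by rewrite (powRM _ cLd_ge0 (ltW d_gt0)) (mulfK (lt0r_neq0 Ds0)).
have -> : powR d ((1 - rho / 4) / r.-1%:R) = Ds / E.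
  rewrite /Ds /E -powRB ?(lt0r_neq0 d_gt0) ?implybT //; congr powR; field.
  by rewrite pnatr_eq0 -lt0n.
have sqrt1 : 1 <= Num.sqrt (r%:R * A).
  rewrite -{1}sqrtr1 ler_sqrt; last by rewrite mulr_ge0 ?ler0n // (le_trans ler01 A1).
  apply: le_trans (A1) _; apply: ler_peMl; first exact: le_trans ler01 A1.
  by rewrite ler1n ltnW.
have key : 2 * r%:R ^+ r * (c * L) * A <= 50 * Num.sqrt (r%:R * A) * E.
  apply: (@le_trans _ _ E).
    apply: le_trans hpoly.
    rewrite (_ : _ * L ^+ 2 = 2 * r%:R ^+ r * (c * L) * (c * L)); last by ring.
    by rewrite ler_wpM2l // mulr_ge0 // mulr_ge0 ?exprn_ge0.
  by rewrite -[E in E <= _]mul1r ler_wpM2r ?ltW //; lra.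
rewrite (_ : 2 * _ * _ * _ * _ = n%:R / Ds * (2 * r%:R ^+ r * (c * L) * A)); last first.
  by field; rewrite gt_eqF.
rewrite (_ : 50 * _ * _ / _ = n%:R / Ds * (50 * Num.sqrt (r%:R * A) * E)); last first.
  by field; rewrite !gt_eqF.
by rewrite ler_wpM2l // divr_ge0 ?ler0n ?ltW.
Qed.

Lemma block_budget (n m k : nat) (rho : R) : 0 <= rho <= 1 -> r%:R * powR c s <= L ->
  m%:R = powR (d / L ^+ r) s -> k%:R = (1 - rho) * r%:R * n%:R * f -> (k * m <= n)%N.
Proof.
move=> /andP[rho0 rho1] hL mE kE; rewrite -(ler_nat R) natrM kE mE.
have -> : (1 - rho) * r%:R * n%:R * f * powR (d / L ^+ r) s
    = n%:R * ((1 - rho) * r%:R * (f * powR (d / L ^+ r) s)) by ring.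
apply: ler_piMr; first exact: ler0n.
rewrite f_mul_powR mulrA ler_pdivrMr // mul1r -mulrA; apply: le_trans hL.
by apply: ler_piMl; rewrite ?mulr_ge0 ?ler0n ?powR_ge0 //; lra.
Qed.

Lemma edge_exponent_le_target (n : nat) (rho : R) : (0 < n)%N -> 0 < rho <= 1 ->
  1 <= c * L -> 2 * r%:R ^+ r * c ^+ 2 * L ^+ 2 <= powR d (rho * s / 4) ->
  2 * (d / n%:R ^+ r.-1) * ((1 - rho) * r%:R * n%:R * f) ^+ r
    <= 50 * n%:R * Num.sqrt (r%:R * powR (c * L) s) / powR d ((1 - rho / 4) / r.-1%:R).
Proof.
move=> n_gt0 /andP[rho0 rho1] cL1 hpoly.
apply: le_trans (weight_le_target n rho0 cL1 hpoly).
by apply: edge_exponent_le_weight; rewrite // ltW.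
Qed.

End Asymptotics.

Lemma Zk_pos_spread_set (R : realType) n r m k (gamma : 'I_r -> R) (kk : 'I_r -> nat)
    (H : hgraph n r) :
  (0 < m)%N -> (forall i, kk i * m <= n)%N -> (\sum_i kk i)%N = k ->
  (forall i, (kk i)%:R = gamma i * k%:R) ->
  [disjoint H & edges_within (spread_set n m kk)] -> Zk_pos m k gamma H.
Proof.
move=> m_gt0 kk_le sum_kk kkE HI.
exists (spread_set n m kk); rewrite card_spread_set // sum_kk; split=> //; split.
  by move=> i; rewrite card_spread_set_part // card_spread_set // sum_kk.
split; first exact: independent_disjoint_edges_within.
by move=> i j _; apply: card_spread_set_block.
Qed.

Lemma hprob_Zk_pos_ge (R : realType) n r m k (gamma : 'I_r -> R) (p : R) :
  (0 < r)%N -> 0 <= p <= 1 -> (0 < m)%N -> (k * m <= n)%N ->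
  \sum_i gamma i = 1 -> (forall i, gamma i <= 1) ->
  (forall i, exists ki : nat, gamma i * k%:R = ki%:R) ->
  (1 - p) ^+ (k ^ r) <= hprob p (fun H : hgraph n r => Zk_pos m k gamma H).
Proof.
move=> r_gt0 p01 m_gt0 km_le gamma_sum gamma_le1 gammak_nat.
pose kk i := Num.truncn (gamma i * k%:R).
have kkE i : (kk i)%:R = gamma i * k%:R.
  by rewrite /kk; have [ki ->] := gammak_nat i; rewrite natrK.
have kk_le i : (kk i * m <= n)%N.
  by apply: leq_trans km_le; rewrite leq_mul2r -(ler_nat R) kkE ler_piMl ?orbT.
have sum_kk : (\sum_i kk i)%N = k.
  apply/eqP; rewrite -(eqr_nat R) natr_sum (eq_bigr _ (fun i _ => kkE i)).
  by rewrite -mulr_suml gamma_sum mul1r.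
set I := spread_set n m kk.
apply: le_trans (hprob_ge_avoid (S := edges_within I) p01
  (fun H => Zk_pos_spread_set m_gt0 kk_le sum_kk kkE)).
case/andP: p01 => p0 p1; apply: ler_wiXn2l; [lra | lra |].
by rewrite -[k in (_ <= k ^ r)%N]sum_kk -(card_spread_set m_gt0 kk_le) card_edges_within.
Qed.

Theorem mainTheorem17 (R : realType) (r : nat) (gamma : 'I_r -> R) :
  (2 <= r)%N ->
  (forall i, 0 < gamma i < 1) ->
  \sum_(i < r) gamma i = 1 ->
  let c := (r%:R ^+ r.-1 * r.-1%:R * \prod_(i < r) gamma i)^-1 in
  exists rho0 : R, 0 < rho0 /\
  forall rho : R, 0 < rho -> rho < rho0 ->
  exists d0 : R, forall d : R, d0 <= d ->
  let f := powR (c * ln d / d) (r.-1%:R)^-1 in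
  exists n0 : nat, forall n m k : nat, (n0 <= n)%N ->
    (0 < m)%N -> (m %| n)%N ->
    m%:R = powR (d / (ln d) ^+ r) (r.-1%:R)^-1 ->
    k%:R = (1 - rho) * r%:R * n%:R * f ->
    (forall i, exists ki : nat, gamma i * k%:R = ki%:R) ->
    hprob (d / n%:R ^+ r.-1) (fun H : hgraph n r => Zk_pos m k gamma H) >=
      expR (- (50 * n%:R * Num.sqrt (r%:R * powR (c * ln d) (r.-1%:R)^-1))
              / powR d ((1 - rho / 4) / r.-1%:R)).
Proof.
move=> r_ge2 gamma01 gamma_sum c.
have r1_gt0 : (0 < r.-1)%N by rewrite -ltnS prednK // ltnW.
have c_gt0 : 0 < c.
  rewrite invr_gt0 mulr_gt0 ?mulr_gt0 ?exprn_gt0 ?ltr0n ?(ltnW r_ge2) //.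
  by apply: prodr_gt0 => i _; case/andP: (gamma01 i).
exists 1; split=> // rho rho_gt0 rho_lt1.
set s : R := r.-1%:R^-1; set a := rho * s / 4; set C := 2 * r%:R ^+ r * c ^+ 2.
exists (1 + expR (r%:R * powR c s) + expR c^-1 + powR (16 * C / a ^+ 2) (2 / a)).
move=> d d_ge f.
have e1 := expR_gt0 (r%:R * powR c s); have e2 := expR_gt0 c^-1.
have e3 := powR_ge0 (16 * C / a ^+ 2) (2 / a).
have d_gt1 : 1 < d by lra.
have hL : r%:R * powR c s <= ln d by apply: ln_ge_of_expR_le; lra.
have cL_ge1 : 1 <= c * ln d.
  rewrite -(mulfV (lt0r_neq0 c_gt0)) ler_wpM2l ?(ltW c_gt0) //.
  by apply: ln_ge_of_expR_le; lra.
have hpoly : C * ln d ^+ 2 <= powR d a.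
  apply: mul_ln_sqr_le_powR; rewrite ?mulr_ge0 ?exprn_ge0 ?ler0n //; try lra.
  by rewrite /a !mulr_gt0 // invr_gt0 ltr0n.
exists (Num.truncn (2 * d)).+1 => n m k n_ge m_gt0 _ mE kE gammak_nat.
have n_gt0 : (0 < n)%N by apply: leq_trans n_ge.
have n_gt2d : 2 * d < n%:R by apply: lt_le_trans (truncnS_gt _) _; rewrite ler_nat.
have /andP[p_ge0 p_le] := edge_prob_le_half (lt_trans ltr01 d_gt1) r1_gt0 n_gt2d.
have rho01 : 0 <= rho <= 1 by rewrite (ltW rho_gt0) (ltW rho_lt1).
have km_le := block_budget r_ge2 c_gt0 d_gt1 rho01 hL mE kE.
apply: le_trans (hprob_Zk_pos_ge (ltnW r_ge2) _ m_gt0 km_le gamma_sum _ gammak_nat).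
- apply: le_trans (expR_le_1Bx_expn _ p_ge0 p_le).
  rewrite ler_expR mulNr lerN2 natrX kE.
  apply: (edge_exponent_le_target r_ge2 c_gt0 d_gt1 n_gt0 _ cL_ge1 hpoly).
  by rewrite rho_gt0 (ltW rho_lt1).
- by rewrite p_ge0 /=; lra.
- by move=> i; case/andP: (gamma01 i) => _ /ltW.
Qed.
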